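(* Let $k\ge 2$ be a constant integer. Any algorithm that, for every $n$-variable $(k,1,0)$-CNF formula $\Phi$, exactly learns $\Phi$ from i.i.d. uniform random solutions of $\Phi$ with probability at least $\frac13$ requires $\Omega_k(\log n)$ samples.
   Context: A $(k,d,s)$-CNF formula on variable set $V$ is a CNF formula in which every clause contains exactly $k$ distinct variables, every variable appears in at most $d$ clauses, and any two distinct clauses share at most $s$ variables (so a $(k,1,0)$-CNF formula has pairwise disjoint clauses). $\mu_\Phi$ denotes the uniform distribution over satisfying assignments of $\Phi$. Exactly learning $\Phi$ means outputting, from i.i.d. samples of $\mu_\Phi$, a CNF formula $\widehat\Phi$ with $\mu_{\widehat\Phi}=\mu_\Phi$ (the same set of satisfying assignments). *)

From HB Require Import structures.
From mathcomp Require Import all_boot all_order all_algebra.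
From mathcomp Require Import reals.
Set Implicit Arguments. Unset Strict Implicit. Unset Printing Implicit Defensive.
Import Order.TTheory GRing.Theory Num.Theory.
Local Open Scope ring_scope.

Definition assignment (n : nat) := {ffun 'I_n -> bool}.
(* A literal (v, b): b = true is the positive literal v, b = false is ~v. *)
Definition literal (n : nat) := ('I_n * bool)%type.
Definition clause (n : nat) := seq (literal n).
Definition cnf (n : nat) := seq (clause n).

Definition lit_sat n (a : assignment n) (l : literal n) : bool := a l.1 == l.2.
Definition clause_sat n (a : assignment n) (C : clause n) : bool := has (lit_sat a) C.
Definition cnf_sat n (a : assignment n) (Phi : cnf n) : bool := all (clause_sat a) Phi.

Definition clause_vars n (C : clause n) : seq 'I_n := map fst C.

Definition kds_cnf (k d s : nat) n (Phi : cnf n) : Prop :=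
  [/\ (forall C, C \in Phi -> uniq (clause_vars C) /\ size (clause_vars C) = k),
      (forall v : 'I_n, (count (fun C => v \in clause_vars C) Phi <= d)%N) &
      (forall i j : nat, (i < size Phi)%N -> (j < size Phi)%N -> i <> j ->
         (#|[pred v : 'I_n | (v \in clause_vars (nth [::] Phi i))
                             && (v \in clause_vars (nth [::] Phi j))]| <= s)%N)].

Definition sols n (Phi : cnf n) : {set assignment n} := [set a | cnf_sat a Phi].

Definition mu (R : realType) n (Phi : cnf n) (a : assignment n) : R :=
  if a \in sols Phi then (#|sols Phi|%:R)^-1 else 0.

Definition sample_prob (R : realType) n m (Phi : cnf n)
    (x : m.-tuple (assignment n)) : R :=
  \prod_(i < m) mu R Phi (tnth x i).

(* A (randomized) learner using m samples: internal randomness w drawn from a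
   finite seed space Omega with probability weights p, output formula
   A w x for samples x. *)
Definition prob_weights (R : realType) (Omega : finType) (p : Omega -> R) : Prop :=
  (forall w, 0 <= p w) /\ \sum_(w : Omega) p w = 1.

(* Probability that A exactly learns Phi: output has same satisfying set. *)
Definition success_prob (R : realType) n m (Omega : finType) (p : Omega -> R)
    (A : Omega -> m.-tuple (assignment n) -> cnf n) (Phi : cnf n) : R :=
  \sum_(w : Omega) p w *
    \sum_(x : m.-tuple (assignment n))
       sample_prob R Phi x * (sols (A w x) == sols Phi)%:R.

From HB Require Import structures.
From mathcomp Require Import all_boot all_order all_algebra.
From mathcomp Require Import reals.
From mathcomp Require Import zify.
Import Order.TTheory GRing.Theory Num.Theory.
Set Implicit Arguments. Unset Strict Implicit. Unset Printing Implicit Defensive.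
Local Open Scope ring_scope.

(* The n - k + 1 single-clause formulas x_1 \/ ... \/ x_(k-1) \/ x_j with
   k <= j <= n are (k,1,0)-CNFs with pairwise distinct solution sets, each of
   which has at least 2^(n-1) solutions.  Hence every sequence of m samples has
   probability at most 2^(-(n-1)m) under each of them.  For a fixed seed and a
   fixed sample sequence the learner's output is correct for at most one of
   them, so the success probabilities summed over the family are at most
   2^(nm) * 2^(-(n-1)m) = 2^m.  Succeeding with probability 1/3 on each member
   thus forces n - k + 1 <= 3 * 2^m, i.e. log n = O(m). *)

Lemma sum_eq_sols_le (R : realType) n (I : finType) (Phi : I -> cnf n)
    (Psi : cnf n) (f : I -> R) (B : R) :
  injective (fun j => sols (Phi j)) -> 0 <= B -> (forall j, f j <= B) ->
  \sum_(j : I) f j * (sols Psi == sols (Phi j))%:R <= B.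
Proof.
move=> inj_sols B_ge0 f_le.
have [j0 /eqP Psi_j0 | no_match] := pickP [pred j | sols Psi == sols (Phi j)].
- rewrite (bigD1 j0) //= Psi_j0 eqxx mulr1 big1 ?addr0 ?f_le // => j j_neq.
  by case: eqP => [/inj_sols j0_j | _]; [rewrite j0_j eqxx in j_neq | rewrite mulr0].
- by rewrite big1 // => j _; rewrite [_ == _]no_match mulr0.
Qed.

Lemma sum_success_prob_le (R : realType) n m (Omega : finType) (p : Omega -> R)
    (A : Omega -> m.-tuple (assignment n) -> cnf n)
    (I : finType) (Phi : I -> cnf n) (B : R) :
  prob_weights p -> injective (fun j => sols (Phi j)) -> 0 <= B ->
  (forall j (x : m.-tuple (assignment n)), sample_prob R (Phi j) x <= B) ->
  \sum_(j : I) success_prob p A (Phi j) <= B * #|{: m.-tuple (assignment n)}|%:R.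
Proof.
move=> [p_ge0 p_sum1] inj_sols B_ge0 sample_le.
set N := #|{: m.-tuple _}|.
have -> : B * N%:R = \sum_w p w * (B * N%:R) by rewrite -mulr_suml p_sum1 mul1r.
rewrite /success_prob exchange_big /=.
apply: ler_sum => w _; rewrite -mulr_sumr; apply: ler_wpM2l => //.
rewrite exchange_big /= mulr_natr -sumr_const.
by apply: ler_sum => x _; apply: sum_eq_sols_le.
Qed.

Lemma card_family_le (R : realType) n m (Omega : finType) (p : Omega -> R)
    (A : Omega -> m.-tuple (assignment n) -> cnf n)
    (I : finType) (Phi : I -> cnf n) (B : R) :
  prob_weights p -> injective (fun j => sols (Phi j)) -> 0 <= B ->
  (forall j (x : m.-tuple (assignment n)), sample_prob R (Phi j) x <= B) ->
  (forall j, 1 / 3 <= success_prob p A (Phi j)) ->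
  #|I|%:R <= 3 * (B * #|{: m.-tuple (assignment n)}|%:R).
Proof.
move=> pw inj_sols B_ge0 sample_le succ.
apply: (@le_trans _ _ (3 * \sum_(j : I) success_prob p A (Phi j))).
  rewrite -ler_pdivrMl ?ltr0n //; apply: le_trans (ler_sum _ (fun j _ => succ j)).
  by rewrite sumr_const div1r mulrC mulr_natl.
by rewrite ler_pM2l ?ltr0n // sum_success_prob_le.
Qed.

Lemma sample_prob_le (R : realType) n m (Phi : cnf n) (N : nat)
    (x : m.-tuple (assignment n)) :
  (0 < N)%N -> (N <= #|sols Phi|)%N -> sample_prob R Phi x <= (N%:R^-1) ^+ m.
Proof.
move=> N_gt0 N_le; rewrite /sample_prob -[m in _ ^+ m]card_ord -prodr_const.
apply: ler_prod => i _; rewrite /mu; case: ifP => _; last by rewrite lexx invr_ge0 ler0n.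
by rewrite invr_ge0 ler0n lef_pV2 ?posrE ?ltr0n ?ler_nat //; apply: leq_trans N_le.
Qed.

Definition flip_at n (v : 'I_n) (a : assignment n) : assignment n :=
  [ffun u => if u == v then ~~ a u else a u].

Lemma flip_atK n (v : 'I_n) : involutive (flip_at v).
Proof. by move=> a; apply/ffunP => u; rewrite !ffunE; case: eqP => // ->; rewrite negbK. Qed.

(* Flipping v maps the non-solutions injectively into the solutions. *)
Lemma card_sols_ge n (Phi : cnf n) (v : 'I_n) :
  (forall a : assignment n, a v -> cnf_sat a Phi) -> (2 ^ n.-1 <= #|sols Phi|)%N.
Proof.
move=> sat_of_v.
have flip_sub : flip_at v @: (~: sols Phi) \subset sols Phi.
  apply/subsetP => _ /imsetP [a a_unsat ->]; rewrite !inE in a_unsat *.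
  apply: (sat_of_v); rewrite ffunE eqxx; apply: contraNN a_unsat; exact: sat_of_v.
have := subset_leq_card flip_sub; rewrite card_imset; last exact: inv_inj (flip_atK v).
have := cardsC (sols Phi); rewrite card_ffun card_bool card_ord.
have n_gt0 : (0 < n)%N := leq_ltn_trans (leq0n v) (ltn_ord v).
have pow_n : (2 ^ n = 2 * 2 ^ n.-1)%N by rewrite -expnS prednK.
by rewrite pow_n; move: (2 ^ n.-1)%N #|sols Phi| #|~: sols Phi| => N s t; lia.
Qed.

Definition pos_clause n (vs : seq 'I_n) : clause n := [seq (v, true) | v <- vs].

Lemma clause_vars_pos_clause n (vs : seq 'I_n) : clause_vars (pos_clause vs) = vs.
Proof. by rewrite /clause_vars -map_comp map_id. Qed.

Lemma clause_sat_pos_clause n (a : assignment n) (vs : seq 'I_n) :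
  clause_sat a (pos_clause vs) = has a vs.
Proof. by rewrite /clause_sat has_map; apply: eq_has => v; rewrite /lit_sat /= eqb_id. Qed.

Lemma sols_pos_clause_inj n (vs ws : seq 'I_n) :
  sols [:: pos_clause vs] = sols [:: pos_clause ws] -> vs =i ws.
Proof.
move=> eq_sols v.
have := congr1 (fun S : {set assignment n} => [ffun u => u == v] \in S) eq_sols.
rewrite /= !inE /cnf_sat /= !andbT !clause_sat_pos_clause.
by rewrite !(@eq_has _ _ (pred1 v)) ?has_pred1 // => u; rewrite ffunE.
Qed.

Lemma kds_single_clause k d s n (C : clause n) :
  (0 < d)%N -> uniq (clause_vars C) -> size (clause_vars C) = k -> kds_cnf k d s [:: C].
Proof.
move=> d_gt0 C_uniq C_size; split.
- by move=> C'; rewrite inE => /eqP ->.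
- by move=> v /=; rewrite addn0; case: (_ \in _).
- by move=> [|i] [|j].
Qed.

Section Petals.

Variables k r : nat.

Definition core_vars : seq 'I_(k.-1 + r) := [seq lshift r i | i <- enum 'I_k.-1].

Definition petal_cnf (t : 'I_r) : cnf (k.-1 + r) :=
  [:: pos_clause (rcons core_vars (rshift k.-1 t))].

Lemma rshift_notin_core_vars (t : 'I_r) : rshift k.-1 t \notin core_vars.
Proof. by apply/mapP => -[i _ /eqP]; rewrite eq_rlshift. Qed.

Lemma petal_cnf_kds (t : 'I_r) : (0 < k)%N -> kds_cnf k 1 0 (petal_cnf t).
Proof.
move=> k_gt0; apply: kds_single_clause; rewrite // clause_vars_pos_clause.
  by rewrite rcons_uniq rshift_notin_core_vars (map_inj_uniq (@lshift_inj _ _)) enum_uniq.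
by rewrite size_rcons size_map size_enum_ord prednK.
Qed.

Lemma petal_cnf_sols_inj : injective (fun t => sols (petal_cnf t)).
Proof.
move=> t t' /sols_pos_clause_inj /(_ (rshift k.-1 t)).
rewrite !mem_rcons !inE eqxx (negbTE (rshift_notin_core_vars t)) !orbF.
by rewrite (inj_eq (@rshift_inj _ _)) => /esym /eqP.
Qed.

Lemma petal_cnf_card_sols (t : 'I_r) : (2 ^ (k.-1 + r).-1 <= #|sols (petal_cnf t)|)%N.
Proof.
apply: (card_sols_ge (v := rshift k.-1 t)) => a a_t.
by rewrite /cnf_sat /= andbT clause_sat_pos_clause has_rcons a_t.
Qed.

End Petals.

Lemma invr_exp2_predn_mul (R : realType) n m :
  (0 < n)%N -> ((2 ^ n.-1)%:R^-1) ^+ m * ((2 ^ n) ^ m)%:R = (2 ^ m)%:R :> R.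
Proof.
move=> n_gt0; rewrite -(prednK n_gt0) expnS expnMn !natrM !natrX /= mulrCA -exprMn.
by rewrite mulVf ?expr1n ?mulr1 // expf_eq0 pnatr_eq0 andbF.
Qed.

Lemma trunc_log2_le (k n m : nat) :
  (2 * k + 8 <= n)%N -> (n - k.-1 <= 3 * 2 ^ m)%N -> (trunc_log 2 n <= 3 * m)%N.
Proof.
move=> n_ge n_sub_le.
have m_gt0 : (0 < m)%N by case: m n_sub_le => [|//]; rewrite expn0; lia.
have n_lt : (n < 2 ^ m.+3)%N by rewrite !expnS; lia.
have n_gt0 : (0 < n)%N by lia.
have := leq_ltn_trans (trunc_logP (isT : (1 < 2)%N) n_gt0) n_lt.
by rewrite ltn_exp2l //; lia.
Qed.

Theorem theorem1p6 :
  forall k : nat, (2 <= k)%N ->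
  exists C N : nat, (0 < C)%N /\
    forall n : nat, (N <= n)%N ->
    forall (R : realType) (m : nat) (Omega : finType) (p : Omega -> R)
           (A : Omega -> m.-tuple (assignment n) -> cnf n),
      prob_weights p ->
      (forall Phi : cnf n, kds_cnf k 1 0 Phi ->
         1 / 3 <= success_prob p A Phi) ->
      (trunc_log 2 n <= C * m)%N.
Proof.
move=> k k_ge2; exists 3%N, (2 * k + 8)%N; split=> // n n_ge.
have [r n_eq] : exists r, n = (k.-1 + r)%N by exists (n - k.-1)%N; lia.
subst n => R m Omega p A pw succ.
have n_gt0 : (0 < k.-1 + r)%N by lia.
have B_ge0 : 0 <= ((2 ^ (k.-1 + r).-1)%:R^-1) ^+ m :> R.
  by rewrite exprn_ge0 // invr_ge0 ler0n.
have := card_family_le pw (@petal_cnf_sols_inj k r) B_ge0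
  (fun t x => sample_prob_le R x (expn_gt0 2 _) (@petal_cnf_card_sols k r t))
  (fun t => succ _ (@petal_cnf_kds k r t (ltnW k_ge2))).
rewrite card_ord card_tuple card_ffun card_bool card_ord invr_exp2_predn_mul //.
rewrite -natrM ler_nat => r_le.
by apply: (trunc_log2_le n_ge); rewrite addKn.
Qed.
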